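(* For $X_d=\otimes_{j=1}^d X_{1,j}$, the following are equivalent: (i) $\sup_{d\in\mathbb N}n^{X_d}(\varepsilon)<\infty$ for every $\varepsilon\in(0,1)$; (ii) $\displaystyle\sum_{j=1}^\infty\sum_{k=2}^\infty\frac{\lambda^{X_{1,j}}_k}{\lambda^{X_{1,j}}_1}<\infty$.
   Context: For a centered Hilbert-space random element $Z$ with finite second moment, $\lambda^Z_1\ge\lambda^Z_2\ge\dots\ge 0$ denote the eigenvalues of its covariance operator $K^Z$ listed with multiplicity (padded with zeros if there are finitely many), $\Lambda^Z=\sum_k\lambda^Z_k$, $\bar\lambda^Z_k=\lambda^Z_k/\Lambda^Z$. Let $H_{1,j}$, $j\in\mathbb N$, be separable Hilbert spaces and $X_{1,j}$ centered $H_{1,j}$-valued random elements with $\mathbb E\|X_{1,j}\|^2<\infty$ and $\lambda^{X_{1,j}}_1>0$. $X_d=\otimes_{j=1}^dX_{1,j}$ means: $X_d$ is a centered random element of the Hilbert tensor product $H_d=\otimes_{j=1}^dH_{1,j}$ with covariance operator $K^{X_d}=\otimes_{j=1}^dK^{X_{1,j}}$; so the eigenvalues of $K^{X_d}$ are the products $\prod_{j=1}^d\lambda^{X_{1,j}}_{k_j}$, $(k_1,\dots,k_d)\in\mathbb N^d$, and $\Lambda^{X_d}=\prod_j\Lambda^{X_{1,j}}$. The average case approximation complexity is $n^{X_d}(\varepsilon)=\min\{n\in\mathbb N: e^{X_d}(n)\le\varepsilon e^{X_d}(0)\}$, where $e^{X_d}(0)=(\mathbb E\|X_d\|^2)^{1/2}$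 and $e^{X_d}(n)$ is the infimum of $(\mathbb E\|X_d-\sum_{m=1}^n l_m(X_d)\psi_m\|^2)^{1/2}$ over $\psi_m\in H_d$, $l_m\in H_d^*$; equivalently $n^{X_d}(\varepsilon)=\min\{n:\sum_{k>n}\bar\lambda^{X_d}_k\le\varepsilon^2\}$. *)

From Stdlib Require Import Reals List.
Open Scope R_scope.

(* Conventions (0-based): factor index j = 0,1,... stands for the paper's
   j = 1,2,...; eigenvalue index k = 0,1,... stands for the paper's k = 1,2,...
   lam j : nat -> R is the eigenvalue listing (with multiplicity, padded by
   zeros, nonincreasing) of the covariance operator K^{X_{1,j}}. *)

(* Eigenvalue sequence of a covariance operator of a centered random element
   with finite second moment: nonnegative, nonincreasing, summable. *)
Definition eig_seq (l : nat -> R) : Prop :=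
  (forall k, 0 <= l k) /\ (forall k, l (S k) <= l k) /\
  (exists L, infinite_sum l L).

(* Eigenvalue of K^{X_d} = (x)_{j<d} K^{X_{1,j}} at multi-index t = (k_1,...,k_d):
   prod_j lam_j(k_j); [prodeig lam j0 t] starts at factor j0. *)
Fixpoint prodeig (lam : nat -> nat -> R) (j0 : nat) (t : list nat) : R :=
  match t with
  | nil => 1
  | k :: t' => lam j0 k * prodeig lam (S j0) t'
  end.

(* mu is the nonincreasing listing, with multiplicity (padded with zeros),
   of the eigenvalues { prodeig lam 0 t : t in N^d } of K^{X_d}:
   mu is nonnegative, nonincreasing, and every value c > 0 occurs in mu
   exactly as many times (finitely many) as among the products. *)
Definition tensor_listing (lam : nat -> nat -> R) (d : nat) (mu : nat -> R) : Prop :=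
  (forall k, 0 <= mu k) /\ (forall k, mu (S k) <= mu k) /\
  forall c, 0 < c ->
    exists (l1 : list nat) (l2 : list (list nat)),
      NoDup l1 /\ NoDup l2 /\ length l1 = length l2 /\
      (forall k, In k l1 <-> mu k = c) /\
      (forall t, In t l2 <-> (length t = d /\ prodeig lam 0 t = c)).

(* "sum_{k>n} lambdabar_k <= eps^2" for the eigenvalue listing mu
   (tail sum over 0-based indices >= n, normalized by Lambda = sum mu). *)
Definition approx_ok (mu : nat -> R) (n : nat) (eps : R) : Prop :=
  exists Lam T, infinite_sum mu Lam /\ infinite_sum (fun k => mu (n + k)%nat) T /\
    T / Lam <= eps ^ 2.

(* Write [s j = Lam j / lam j 0 - 1 = sum_(k >= 1) lam j k / lam j 0].  The eigenvalues of
   K^{X_d} indexed by a box of multi-indices sum to a product of partial sums of the [lam j],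
   and any n distinct eigenvalues sum to at most the n largest ones; conversely every partial
   sum of the listing is at most [prod_j Lam j].
   If n(1/2) <= N for every d, a box with K values in each coordinate gives
   [prod_j sum_(k<K) lam j k <= Lambda_d <= 4/3 * N * prod_j lam j 0], so
   [1 + sum_j x_j <= prod_j (1 + x_j) <= 4N/3] for the partial ratios x_j, and letting K grow
   bounds the partial sums of [s].
   If [s] is summable, keep K values in the first J coordinates and a single one in the others:
   the box has at most K^J elements whatever d is, and it captures the fraction
   [prod_j rho_j >= 1 - sum_j (1 - rho_j) >= 1 - eps^2] of [prod_j Lam j >= Lambda_d], because
   [1 - rho_j] is small for j < J and at most [s j] for j >= J. *)

From Stdlib Require Import Reals List Lra Lia Classical ClassicalEpsilon FunctionalExtensionality.
Open Scope R_scope.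

Fixpoint psum (f : nat -> R) (n : nat) : R :=
  match n with O => 0 | S n' => psum f n' + f n' end.

Fixpoint lsum {A : Type} (f : A -> R) (l : list A) : R :=
  match l with nil => 0 | x :: l' => f x + lsum f l' end.

Fixpoint pprod (j0 d : nat) (h : nat -> R) : R :=
  match d with O => 1 | S d' => h j0 * pprod (S j0) d' h end.

Lemma psum_S_sum_f_R0 f n : psum f (S n) = sum_f_R0 f n.
Proof. induction n as [|n IH]; simpl in *; [ring|]. rewrite <- IH; ring. Qed.

Lemma psum_nonneg f n : (forall k, 0 <= f k) -> 0 <= psum f n.
Proof. intros Hf; induction n as [|n IH]; simpl; [lra|]. specialize (Hf n); lra. Qed.

Lemma psum_le f g n : (forall k, f k <= g k) -> psum f n <= psum g n.
Proof. intros Hfg; induction n as [|n IH]; simpl; [lra|]. specialize (Hfg n); lra. Qed.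

Lemma psum_le_psum f m n : (forall k, 0 <= f k) -> (m <= n)%nat -> psum f m <= psum f n.
Proof. intros Hf Hmn; induction Hmn as [|n _ IH]; simpl; [lra|]. specialize (Hf n); lra. Qed.

Lemma psum_ext_lt f g n : (forall k, (k < n)%nat -> f k = g k) -> psum f n = psum g n.
Proof.
  intros Hfg; induction n as [|n IH]; simpl; [reflexivity|].
  rewrite Hfg by lia. rewrite IH; [reflexivity|]. intros k Hk; apply Hfg; lia.
Qed.

Lemma psum_const c n : psum (fun _ => c) n = INR n * c.
Proof. induction n as [|n IH]; simpl psum; [simpl; ring|]. rewrite IH, S_INR; ring. Qed.

Lemma noninc_le (u : nat -> R) : (forall k, u (S k) <= u k) ->
  forall m n, (m <= n)%nat -> u n <= u m.
Proof. intros Hu m n Hmn; induction Hmn as [|n _ IH]; [lra|]. specialize (Hu n); lra. Qed.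

Lemma psum_le_mul_first u n : (forall k, u (S k) <= u k) -> psum u n <= INR n * u O.
Proof.
  intros Hu; induction n as [|n IH]; simpl psum; [simpl; lra|].
  pose proof (noninc_le u Hu 0 n ltac:(lia)). rewrite S_INR; lra.
Qed.

Lemma lsum_app {A} (f : A -> R) l1 l2 : lsum f (l1 ++ l2) = lsum f l1 + lsum f l2.
Proof. induction l1 as [|x l1 IH]; simpl; [ring|]. rewrite IH; ring. Qed.

Lemma lsum_nonneg {A} (f : A -> R) l : (forall x, In x l -> 0 <= f x) -> 0 <= lsum f l.
Proof.
  induction l as [|x l IH]; simpl; intros Hf; [lra|].
  pose proof (Hf x (or_introl eq_refl)). pose proof (IH (fun y Hy => Hf y (or_intror Hy))). lra.
Qed.

Lemma lsum_seq f n : lsum f (seq 0 n) = psum f n.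
Proof. induction n as [|n IH]; [reflexivity|]. rewrite seq_S, lsum_app, IH; simpl; ring. Qed.

Lemma lsum_map {A B} (f : B -> R) (g : A -> B) l : lsum f (map g l) = lsum (fun x => f (g x)) l.
Proof. induction l as [|x l IH]; simpl; congruence. Qed.

Lemma lsum_map_eq {A B} (f : A -> R) (g : B -> R) F G :
  map g G = map f F -> lsum g G = lsum f F.
Proof.
  revert G; induction F as [|x F IH]; intros [|y G]; simpl; intros H; try discriminate; auto.
  injection H as Hxy HFG. rewrite Hxy, (IH G HFG); reflexivity.
Qed.

Lemma lsum_scale_l {A} (f : A -> R) c l : lsum (fun x => c * f x) l = c * lsum f l.
Proof. induction l as [|x l IH]; simpl; [ring|]. rewrite IH; ring. Qed.

Lemma lsum_scale_r {A} (f : A -> R) c l : lsum (fun x => f x * c) l = lsum f l * c.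
Proof. induction l as [|x l IH]; simpl; [ring|]. rewrite IH; ring. Qed.

Lemma lsum_incl {A} (f : A -> R) (G B : list A) :
  NoDup G -> incl G B -> (forall x, In x B -> 0 <= f x) -> lsum f G <= lsum f B.
Proof.
  revert B; induction G as [|x G IH]; intros B HG HGB Hf; simpl.
  - apply lsum_nonneg; auto.
  - destruct (in_split x B (HGB x (or_introl eq_refl))) as [B1 [B2 ->]].
    apply NoDup_cons_iff in HG as [HxG HG].
    assert (HG' : lsum f G <= lsum f (B1 ++ B2)).
    { apply IH; auto.
      - intros y Hy. destruct (in_app_or _ _ _ (HGB y (or_intror Hy))) as [H|[H|H]];
          apply in_or_app; auto. subst; contradiction.
      - intros y Hy. apply Hf, in_or_app. apply in_app_or in Hy as [H|H]; simpl; auto. }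
    rewrite lsum_app in *. simpl. lra.
Qed.

Lemma lsum_filter_pos {A} (f : A -> R) l : (forall x, In x l -> 0 <= f x) ->
  lsum f (filter (fun x => if Rlt_dec 0 (f x) then true else false) l) = lsum f l.
Proof.
  induction l as [|x l IH]; simpl; intros Hf; [reflexivity|].
  pose proof (Hf x (or_introl eq_refl)).
  destruct (Rlt_dec 0 (f x)); simpl; rewrite IH by auto; lra.
Qed.

Lemma lsum_le_psum_length (u : nat -> R) : (forall k, 0 <= u k) -> (forall k, u (S k) <= u k) ->
  forall G, NoDup G -> lsum u G <= psum u (length G).
Proof.
  intros Hu0 Hu G. remember (length G) as m eqn:Hm. revert G Hm.
  induction m as [|m IH]; intros G Hm HG.
  - destruct G; simpl in *; [lra|discriminate].
  - destruct (classic (exists x, In x G /\ (m <= x)%nat)) as [[x [Hx Hmx]]|Hno].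
    + destruct (in_split _ _ Hx) as [G1 [G2 ->]].
      rewrite length_app in Hm; simpl in Hm.
      assert (lsum u (G1 ++ G2) <= psum u m)
        by (apply IH; [rewrite length_app; lia | exact (NoDup_remove_1 _ _ _ HG)]).
      pose proof (noninc_le u Hu m x Hmx). rewrite lsum_app in *. simpl. lra.
    + exfalso. assert (Hincl : incl G (seq 0 m)).
      { intros y Hy. apply in_seq. split; [lia|].
        destruct (Nat.lt_ge_cases y m); [lia|]. exfalso; eauto. }
      pose proof (NoDup_incl_length HG Hincl). rewrite length_seq in *. lia.
Qed.

Lemma infinite_sum_psum f L : infinite_sum f L <-> Un_cv (psum f) L.
Proof.
  split; intros H.
  - apply (CV_shift _ 1). apply (Un_cv_ext (sum_f_R0 f)); [|exact H].
    intros n. rewrite Nat.add_1_r, psum_S_sum_f_R0; reflexivity.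
  - apply (Un_cv_ext (fun n => psum f (n + 1))); [|exact (CV_shift' _ 1 _ H)].
    intros n. rewrite Nat.add_1_r, psum_S_sum_f_R0; reflexivity.
Qed.

Lemma Un_cv_const c : Un_cv (fun _ => c) c.
Proof. intros e He. exists O. intros n _. unfold Rdist. rewrite Rminus_diag, Rabs_R0; lra. Qed.

Lemma psum_le_infinite_sum f L n : (forall k, 0 <= f k) -> infinite_sum f L -> psum f n <= L.
Proof.
  intros Hf HL. apply infinite_sum_psum in HL.
  apply (growing_ineq (psum f)); auto. intros m; simpl. specialize (Hf m); lra.
Qed.

Lemma infinite_sum_le_bound f L B : infinite_sum f L -> (forall n, psum f n <= B) -> L <= B.
Proof.
  intros HL HB. apply infinite_sum_psum in HL.
  exact (Rle_cv_lim (Vn := fun _ => B) HB HL (Un_cv_const B)).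
Qed.

Lemma ex_infinite_sum_bounded f B : (forall k, 0 <= f k) -> (forall n, psum f n <= B) ->
  exists L, infinite_sum f L.
Proof.
  intros Hf HB. destruct (growing_cv (psum f)) as [L HL].
  - intros n; simpl. specialize (Hf n); lra.
  - exists B. intros x [n ->]. apply HB.
  - exists L. apply infinite_sum_psum, HL.
Qed.

Lemma infinite_sum_tail f L n : infinite_sum f L ->
  infinite_sum (fun k => f (n + k)%nat) (L - psum f n).
Proof.
  intros HL. apply infinite_sum_psum in HL. apply infinite_sum_psum.
  apply (Un_cv_ext (fun m => psum f (m + n) - psum f n)).
  - intros m. induction m as [|m IH]; simpl; [ring|].
    rewrite <- IH, (Nat.add_comm n m); ring.
  - exact (CV_minus _ _ _ _ (CV_shift' _ n _ HL) (Un_cv_const _)).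
Qed.

Lemma infinite_sum_normalized_tail f L : f O <> 0 -> infinite_sum f L ->
  infinite_sum (fun k => f (S k) / f O) (L / f O - 1).
Proof.
  intros Hf0 HL. apply infinite_sum_psum.
  pose proof (proj1 (infinite_sum_psum _ _) (infinite_sum_tail f L 1 HL)) as Htail.
  simpl in Htail.
  apply (Un_cv_ext (fun n => psum (fun k => f (S k)) n * / f O)).
  - intros n. induction n as [|n IH]; simpl psum; [ring|]. rewrite <- IH. unfold Rdiv; ring.
  - replace (L / f O - 1) with ((L - (0 + f O)) * / f O) by (field; exact Hf0).
    exact (CV_mult _ _ _ _ Htail (Un_cv_const _)).
Qed.

Lemma infinite_sum_eventually_gt f L e : infinite_sum f L -> 0 < e ->
  exists N, forall n, (N <= n)%nat -> L - e < psum f n.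
Proof.
  intros HL He. apply infinite_sum_psum in HL. destruct (HL e He) as [N HN].
  exists N. intros n Hn. specialize (HN n Hn). unfold Rdist in HN. apply Rabs_def2 in HN. lra.
Qed.

Lemma Un_cv_psum (u : nat -> nat -> R) (l : nat -> R) d :
  (forall j, Un_cv (u j) (l j)) -> Un_cv (fun K => psum (fun j => u j K) d) (psum l d).
Proof.
  intros Hu; induction d as [|d IH]; simpl.
  - apply Un_cv_const.
  - exact (CV_plus _ _ _ _ IH (Hu d)).
Qed.

Lemma ex_bound_forall_lt (P : nat -> nat -> Prop) J :
  (forall j, exists N, forall n, (N <= n)%nat -> P j n) ->
  exists N, forall j n, (j < J)%nat -> (N <= n)%nat -> P j n.
Proof.
  intros HP; induction J as [|J [N1 H1]].
  - exists O; intros; lia.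
  - destruct (HP J) as [N2 H2]. exists (Nat.max N1 N2). intros j n Hj Hn.
    destruct (Nat.eq_dec j J) as [->|]; [apply H2 | apply H1]; lia.
Qed.

(** * Products and boxes of multi-indices *)

Lemma pprod_nonneg h d j0 : (forall j, 0 <= h j) -> 0 <= pprod j0 d h.
Proof. revert j0; induction d; intros j0 Hh; simpl; [lra|]. apply Rmult_le_pos; auto. Qed.

Lemma pprod_pos h d j0 : (forall j, 0 < h j) -> 0 < pprod j0 d h.
Proof. revert j0; induction d; intros j0 Hh; simpl; [lra|]. apply Rmult_lt_0_compat; auto. Qed.

Lemma pprod_le h1 h2 d j0 : (forall j, 0 <= h1 j <= h2 j) -> pprod j0 d h1 <= pprod j0 d h2.
Proof.
  revert j0; induction d; intros j0 Hh; simpl; [lra|].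
  apply Rmult_le_compat; try apply Hh; auto.
  apply pprod_nonneg; intros j; apply Hh.
Qed.

Lemma pprod_div h1 h2 d j0 : (forall j, 0 < h2 j) ->
  pprod j0 d (fun j => h1 j / h2 j) = pprod j0 d h1 / pprod j0 d h2.
Proof.
  revert j0; induction d; intros j0 Hh; simpl; [field|].
  rewrite IHd by auto.
  pose proof (pprod_pos h2 d (S j0) Hh). pose proof (Hh j0). field; lra.
Qed.

Lemma pprod_last h d j0 : pprod j0 (S d) h = pprod j0 d h * h (j0 + d)%nat.
Proof.
  revert j0; induction d; intros j0; simpl.
  - rewrite Nat.add_0_r; ring.
  - simpl in IHd. rewrite IHd, <- plus_n_Sm. simpl. ring.
Qed.

Lemma one_add_psum_le_pprod x d : (forall j, 0 <= x j) ->
  1 + psum x d <= pprod 0 d (fun j => 1 + x j).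
Proof.
  intros Hx; induction d as [|d IH]; [simpl; lra|].
  rewrite pprod_last. simpl. pose proof (psum_nonneg x d Hx). specialize (Hx d). nra.
Qed.

Lemma one_sub_psum_le_pprod x d : (forall j, 0 <= x j <= 1) ->
  1 - psum (fun j => 1 - x j) d <= pprod 0 d x.
Proof.
  intros Hx; induction d as [|d IH]; [simpl; lra|].
  rewrite pprod_last. simpl.
  assert (0 <= pprod 0 d x) by (apply pprod_nonneg; apply Hx).
  assert (0 <= psum (fun j => 1 - x j) d) by (apply psum_nonneg; intros j; specialize (Hx j); lra).
  specialize (Hx d). nra.
Qed.

Lemma pprod_ext h1 h2 d j0 : (forall j, h1 j = h2 j) -> pprod j0 d h1 = pprod j0 d h2.
Proof. revert j0; induction d; intros j0 Hh; simpl; [reflexivity|]. rewrite Hh, IHd; auto. Qed.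

Fixpoint box (j0 d : nat) (Kf : nat -> nat) : list (list nat) :=
  match d with
  | O => nil :: nil
  | S d' => flat_map (fun k => map (cons k) (box (S j0) d' Kf)) (seq 0 (Kf j0))
  end.

Lemma length_of_In_box j0 d Kf t : In t (box j0 d Kf) -> length t = d.
Proof.
  revert j0 t; induction d as [|d IH]; simpl; intros j0 t Ht.
  - destruct Ht as [<-|[]]; reflexivity.
  - apply in_flat_map in Ht as [k [_ Ht]]. apply in_map_iff in Ht as [t' [<- Ht']].
    simpl; f_equal; eauto.
Qed.

Lemma In_box_const j0 d M t : length t = d -> (forall k, In k t -> (k < M)%nat) ->
  In t (box j0 d (fun _ => M)).
Proof.
  revert j0 d; induction t as [|k t IH]; intros j0 d Hd Ht; simpl in Hd; subst d; simpl.
  - left; reflexivity.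
  - apply in_flat_map. exists k. split.
    + apply in_seq. pose proof (Ht k (or_introl eq_refl)). lia.
    + apply in_map, IH; [reflexivity|]. intros k' Hk'; apply Ht; right; exact Hk'.
Qed.

Lemma NoDup_flat_map_cons (ks : list nat) (B : list (list nat)) : NoDup ks -> NoDup B ->
  NoDup (flat_map (fun k => map (cons k) B) ks).
Proof.
  intros Hks HB; induction Hks as [|k ks Hk _ IH]; simpl; [constructor|].
  apply NoDup_app; auto.
  - apply NoDup_map_NoDup_ForallPairs; auto. intros t t' _ _ H; injection H; auto.
  - intros t Ht Ht'. apply in_map_iff in Ht as [u [<- _]].
    apply in_flat_map in Ht' as [k' [Hk' Ht']]. apply in_map_iff in Ht' as [u' [Hu _]].
    injection Hu as -> _. contradiction.
Qed.

Lemma NoDup_box j0 d Kf : NoDup (box j0 d Kf).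
Proof.
  revert j0; induction d as [|d IH]; intros j0; simpl.
  - repeat constructor; auto.
  - apply NoDup_flat_map_cons; [apply seq_NoDup | apply IH].
Qed.

Definition cutoff (J K j : nat) : nat := if (j <? J)%nat then K else 1%nat.

Lemma length_box_cutoff J K d j0 : (1 <= K)%nat ->
  (length (box j0 d (cutoff J K)) <= K ^ (J - j0))%nat.
Proof.
  revert j0; induction d as [|d IH]; intros j0 HK; simpl.
  - pose proof (Nat.pow_le_mono_l 1 K (J - j0) HK) as H. rewrite Nat.pow_1_l in H. lia.
  - rewrite (flat_map_constant_length (c := length (box (S j0) d (cutoff J K))))
      by (intros; apply length_map).
    rewrite length_seq. specialize (IH (S j0) HK). unfold cutoff at 1.
    destruct (Nat.ltb_spec j0 J).
    + replace (J - j0)%nat with (S (J - S j0)) by lia. apply Nat.mul_le_mono_l, IH.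
    + replace (J - j0)%nat with O by lia. replace (J - S j0)%nat with O in IH by lia. lia.
Qed.

Lemma lsum_prodeig_box lam j0 d Kf :
  lsum (prodeig lam j0) (box j0 d Kf) = pprod j0 d (fun j => psum (lam j) (Kf j)).
Proof.
  revert j0; induction d as [|d IH]; intros j0; simpl; [ring|].
  rewrite <- lsum_seq, <- lsum_scale_r.
  induction (seq 0 (Kf j0)) as [|k ks IHks]; simpl; [reflexivity|].
  rewrite lsum_app, IHks, lsum_map. simpl. rewrite lsum_scale_l, IH. reflexivity.
Qed.

(** * Listings with matching fibres *)

Definition fibers_match {X Y : Type} (P : X -> Prop) (f : X -> R) (Q : Y -> Prop) (g : Y -> R) :=
  forall c, 0 < c -> exists (l1 : list X) (l2 : list Y),
    NoDup l1 /\ NoDup l2 /\ length l1 = length l2 /\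
    (forall x, In x l1 <-> P x /\ f x = c) /\ (forall y, In y l2 <-> Q y /\ g y = c).

Lemma fibers_match_sym {X Y} (P : X -> Prop) f (Q : Y -> Prop) g :
  fibers_match P f Q g -> fibers_match Q g P f.
Proof.
  intros H c Hc. destruct (H c Hc) as [l1 [l2 [H1 [H2 [H3 [H4 H5]]]]]].
  exists l2, l1. auto.
Qed.

Definition in_fiber {X} (f : X -> R) (c : R) (x : X) : bool :=
  if Req_EM_T (f x) c then true else false.

Lemma in_fiber_spec {X} (f : X -> R) c x : in_fiber f c x = true <-> f x = c.
Proof. unfold in_fiber. destruct (Req_EM_T (f x) c); split; congruence. Qed.

Lemma length_filter_in_fiber_map {X Y} (f : X -> R) (g : Y -> R) c F G :
  map g G = map f F -> length (filter (in_fiber g c) G) = length (filter (in_fiber f c) F).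
Proof.
  revert G; induction F as [|x F IH]; intros [|y G]; simpl; intros H; try discriminate; auto.
  injection H as Hxy HFG.
  assert (E : in_fiber g c y = in_fiber f c x) by (unfold in_fiber; rewrite Hxy; reflexivity).
  rewrite E. destruct (in_fiber f c x); simpl; rewrite (IH G HFG); reflexivity.
Qed.

Lemma fibers_match_fresh {X Y} (P : X -> Prop) f (Q : Y -> Prop) g F G x :
  fibers_match P f Q g -> map g G = map f F -> NoDup (x :: F) ->
  (forall x', In x' (x :: F) -> P x') -> 0 < f x ->
  exists y, Q y /\ g y = f x /\ ~ In y G.
Proof.
  intros Hfib HGF HF HP Hx.
  destruct (Hfib (f x) Hx) as [l1 [l2 [Hl1 [Hl2 [Hlen [Hin1 Hin2]]]]]].
  (* Otherwise the fibre of [g] at [f x] lies inside [G], whose part over [f x] is matched with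
     that of [F]: too small to accommodate a fibre as large as the one of [f] containing [x]. *)
  apply NNPP; intros Hno.
  assert (Hsub2 : incl l2 (filter (in_fiber g (f x)) G)).
  { intros y Hy. apply filter_In. apply Hin2 in Hy as [HQ Hgy]. split.
    - apply NNPP; intros HyG. apply Hno; eauto.
    - apply in_fiber_spec, Hgy. }
  assert (Hsub1 : incl (x :: filter (in_fiber f (f x)) F) l1).
  { intros z [<-|Hz]; apply Hin1.
    - split; [apply HP; left|]; reflexivity.
    - apply filter_In in Hz as [Hz Hfz]. split; [apply HP; right; exact Hz|].
      apply in_fiber_spec, Hfz. }
  assert (Hnd : NoDup (x :: filter (in_fiber f (f x)) F)).
  { apply NoDup_cons_iff in HF as [HxF HF]. constructor.
    - intros Hc; apply filter_In in Hc as [Hc _]; contradiction.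
    - apply NoDup_filter, HF. }
  pose proof (NoDup_incl_length Hl2 Hsub2). pose proof (NoDup_incl_length Hnd Hsub1).
  rewrite (length_filter_in_fiber_map f g (f x) F G HGF) in *. simpl in *. lia.
Qed.

Lemma fibers_match_map {X Y} (P : X -> Prop) f (Q : Y -> Prop) g :
  fibers_match P f Q g -> forall F, NoDup F -> (forall x, In x F -> P x /\ 0 < f x) ->
  exists G, NoDup G /\ (forall y, In y G -> Q y) /\ map g G = map f F.
Proof.
  intros Hfib F; induction F as [|x F IH]; intros HF HPF.
  - exists nil. repeat split; [constructor | contradiction].
  - destruct IH as [G [HG [HQG HGF]]].
    { apply NoDup_cons_iff in HF; tauto. }
    { intros x' Hx'; apply HPF; right; exact Hx'. }
    destruct (fibers_match_fresh P f Q g F G x Hfib HGF HF) as [y [HQy [Hgy HyG]]].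
    { intros x' Hx'; apply HPF, Hx'. }
    { apply HPF; left; reflexivity. }
    exists (y :: G). repeat split.
    + constructor; assumption.
    + intros z [<-|Hz]; auto.
    + simpl. rewrite Hgy, HGF; reflexivity.
Qed.

Lemma fibers_match_lsum {X Y} (P : X -> Prop) f (Q : Y -> Prop) g :
  fibers_match P f Q g -> (forall x, P x -> 0 <= f x) ->
  forall F, NoDup F -> (forall x, In x F -> P x) ->
  exists G, NoDup G /\ (forall y, In y G -> Q y) /\ (length G <= length F)%nat /\
    lsum g G = lsum f F.
Proof.
  intros Hfib Hf F HF HPF.
  set (Fpos := filter (fun x => if Rlt_dec 0 (f x) then true else false) F).
  destruct (fibers_match_map P f Q g Hfib Fpos) as [G [HG [HQG HGF]]].
  - apply NoDup_filter, HF.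
  - intros x Hx. apply filter_In in Hx as [Hx Hpos]. split; [auto|].
    destruct (Rlt_dec 0 (f x)); [assumption | discriminate].
  - exists G. repeat split; auto.
    + rewrite <- (length_map g G), HGF, length_map. apply filter_length_le.
    + rewrite (lsum_map_eq _ _ _ _ HGF). apply lsum_filter_pos. auto.
Qed.

Lemma prodeig_nonneg lam t j0 : (forall j k, 0 <= lam j k) -> 0 <= prodeig lam j0 t.
Proof. revert j0; induction t; intros j0 Hlam; simpl; [lra|]. apply Rmult_le_pos; auto. Qed.

Lemma prodeig_le_pprod_first lam t j0 : (forall j k, 0 <= lam j k) ->
  (forall j k, lam j (S k) <= lam j k) ->
  prodeig lam j0 t <= pprod j0 (length t) (fun j => lam j O).
Proof.
  revert j0; induction t as [|k t IH]; intros j0 Hlam Hdec; simpl; [lra|].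
  apply Rmult_le_compat; auto using prodeig_nonneg.
  apply (noninc_le (lam j0)); [apply Hdec | lia].
Qed.

Lemma In_le_list_max k l : In k l -> (k <= list_max l)%nat.
Proof.
  intros Hk. pose proof (proj1 (list_max_le l (list_max l)) (le_n _)) as H.
  rewrite Forall_forall in H. auto.
Qed.

Section TensorListing.

Variable lam : nat -> nat -> R.
Hypothesis lam_ge0 : forall j k, 0 <= lam j k.
Variable d : nat.
Variable mu : nat -> R.
Hypothesis mu_listing : tensor_listing lam d mu.

Lemma tensor_listing_fibers :
  fibers_match (fun _ : nat => True) mu (fun t => length t = d) (prodeig lam 0).
Proof.
  intros c Hc. destruct mu_listing as [_ [_ Hfib]].
  destruct (Hfib c Hc) as [l1 [l2 [H1 [H2 [H3 [H4 H5]]]]]].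
  exists l1, l2. do 3 (split; [assumption|]). split; intros x; [rewrite H4 | rewrite H5]; tauto.
Qed.

Lemma listing_first_le : (forall j k, lam j (S k) <= lam j k) ->
  mu O <= pprod 0 d (fun j => lam j O).
Proof.
  intros Hdec. destruct mu_listing as [mu_ge0 _].
  destruct (fibers_match_lsum _ _ _ _ tensor_listing_fibers (fun x _ => mu_ge0 x) (O :: nil))
    as [G [_ [HG [Hlen Hsum]]]]; [repeat constructor; auto | auto |].
  simpl in Hsum, Hlen. rewrite Rplus_0_r in Hsum. rewrite <- Hsum.
  destruct G as [|t [|t' G]]; simpl in Hlen |- *; try lia.
  - apply pprod_nonneg; auto.
  - rewrite Rplus_0_r, <- (HG t (or_introl eq_refl)). apply prodeig_le_pprod_first; auto.
Qed.

Lemma lsum_prodeig_le_psum F : NoDup F -> (forall t, In t F -> length t = d) ->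
  lsum (prodeig lam 0) F <= psum mu (length F).
Proof.
  intros HF HdF. destruct mu_listing as [mu_ge0 [mu_noninc _]].
  destruct (fibers_match_lsum _ _ _ _ (fibers_match_sym _ _ _ _ tensor_listing_fibers)
    (fun t _ => prodeig_nonneg lam t 0 lam_ge0) F HF HdF) as [G [HG [_ [Hlen Hsum]]]].
  rewrite <- Hsum.
  apply (Rle_trans _ (psum mu (length G))); [apply lsum_le_psum_length; auto|].
  apply psum_le_psum; auto.
Qed.

Lemma psum_le_pprod_sums (Lam : nat -> R) : (forall j, infinite_sum (lam j) (Lam j)) ->
  forall K, psum mu K <= pprod 0 d Lam.
Proof.
  intros HLam K. destruct mu_listing as [mu_ge0 _].
  rewrite <- lsum_seq.
  destruct (fibers_match_lsum _ _ _ _ tensor_listing_fibers (fun x _ => mu_ge0 x) (seq 0 K)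
    (seq_NoDup _ _) (fun _ _ => I)) as [G [HG [HdG [_ Hsum]]]].
  rewrite <- Hsum.
  set (M := S (list_max (map (@list_max) G))).
  apply (Rle_trans _ (lsum (prodeig lam 0) (box 0 d (fun _ => M)))).
  - apply lsum_incl; auto using prodeig_nonneg.
    intros t Ht. apply In_box_const; auto. intros k Hk.
    pose proof (In_le_list_max _ _ Hk).
    pose proof (In_le_list_max _ _ (in_map (@list_max) _ _ Ht)). unfold M; lia.
  - rewrite lsum_prodeig_box. apply pprod_le. intros j. split.
    + apply psum_nonneg; auto.
    + apply psum_le_infinite_sum; auto.
Qed.

End TensorListing.

Lemma approx_ok_iff u n eps L : (forall k, 0 <= u k) -> infinite_sum u L ->
  approx_ok u n eps <-> (1 - eps ^ 2) * L <= psum u n.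
Proof.
  intros Hu HL.
  pose proof (infinite_sum_tail u L n HL) as HT.
  pose proof (psum_le_infinite_sum u L n Hu HL) as Hn.
  pose proof (psum_nonneg u n Hu) as Hn0.
  pose proof (pow2_ge_0 eps) as He.
  unfold approx_ok. split.
  - intros [L' [T [HL' [HT' Hle]]]].
    rewrite (uniqueness_sum _ _ _ HL' HL), (uniqueness_sum _ _ _ HT' HT) in Hle.
    destruct (Req_dec L 0) as [->|HL0]; [lra|].
    apply (Rmult_le_compat_r L) in Hle; [|lra]. unfold Rdiv in Hle.
    rewrite Rmult_assoc, Rinv_l, Rmult_1_r in Hle by exact HL0. lra.
  - intros Hle. exists L, (L - psum u n). do 2 (split; [assumption|]).
    destruct (Req_dec L 0) as [->|HL0].
    + (* the tail and the total both vanish; [x / 0 = 0] *)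
      unfold Rdiv. rewrite Rinv_0, Rmult_0_r. exact He.
    + apply (Rmult_le_reg_r L); [lra|]. unfold Rdiv.
      rewrite Rmult_assoc, Rinv_l by exact HL0. lra.
Qed.

Lemma psum_cutoff_le (a b : nat -> R) J d : (forall j, 0 <= a j) -> (forall j, 0 <= b j) ->
  psum (fun j => if (j <? J)%nat then a j else b j) d <= psum a J + psum (fun k => b (J + k)%nat) d.
Proof.
  intros Ha Hb. set (c := fun j => if (j <? J)%nat then a j else b j).
  assert (Hc : forall j, 0 <= c j) by (intros j; unfold c; destruct (j <? J)%nat; auto).
  assert (Hsplit : forall m, psum c (J + m) = psum a J + psum (fun k => b (J + k)%nat) m).
  { induction m as [|m IH].
    - rewrite Nat.add_0_r. simpl psum. rewrite Rplus_0_r. apply psum_ext_lt.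
      intros k Hk. unfold c. apply Nat.ltb_lt in Hk. rewrite Hk. reflexivity.
    - rewrite <- plus_n_Sm. simpl psum. rewrite IH. unfold c.
      replace (J + m <? J)%nat with false by (symmetry; apply Nat.ltb_ge; lia). ring. }
  rewrite <- Hsplit. apply psum_le_psum; [exact Hc | lia].
Qed.

Lemma div_sub_one_nonneg a b : 0 < a -> a <= b -> 0 <= b / a - 1.
Proof.
  intros Ha Hab. replace (b / a - 1) with ((b - a) / a) by (field; lra).
  unfold Rdiv; apply Rmult_le_pos; [lra | left; apply Rinv_0_lt_compat, Ha].
Qed.

Section Proposition5.

Variable lam : nat -> nat -> R.
Hypothesis lam_ge0 : forall j k, 0 <= lam j k.
Hypothesis lam_noninc : forall j k, lam j (S k) <= lam j k.
Hypothesis lam_first_pos : forall j, 0 < lam j O.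
Variable Lam : nat -> R.
Hypothesis lam_sum : forall j, infinite_sum (lam j) (Lam j).
Variable mu : nat -> nat -> R.
Hypothesis mu_listing : forall d, (1 <= d)%nat -> tensor_listing lam d (mu d).

Lemma lam_first_le_Lam j : lam j O <= Lam j.
Proof.
  pose proof (psum_le_infinite_sum (lam j) (Lam j) 1 (lam_ge0 j) (lam_sum j)). simpl in *. lra.
Qed.

Lemma Lam_pos j : 0 < Lam j.
Proof. pose proof (lam_first_le_Lam j). pose proof (lam_first_pos j). lra. Qed.

Lemma normalized_tail_nonneg j : 0 <= Lam j / lam j O - 1.
Proof. apply div_sub_one_nonneg; [apply lam_first_pos | apply lam_first_le_Lam]. Qed.

Section BoundedComplexity.

Variable N : nat.
Hypothesis complexity_le : forall d, (1 <= d)%nat ->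
  exists n, (n <= N)%nat /\ approx_ok (mu d) n (1 / 2).

Lemma pprod_psum_le_of_complexity d K : (1 <= d)%nat ->
  pprod 0 d (fun j => psum (lam j) K) <= 4 / 3 * INR N * pprod 0 d (fun j => lam j O).
Proof.
  intros Hd. destruct (complexity_le d Hd) as [n [Hn Happ]].
  pose proof (mu_listing d Hd) as Hmu. destruct (mu_listing d Hd) as [mu_ge0 [mu_noninc _]].
  assert (HL : exists L, infinite_sum (mu d) L) by (destruct Happ as [L [_ [HL _]]]; eauto).
  destruct HL as [L HL]. rewrite (approx_ok_iff _ _ _ _ mu_ge0 HL) in Happ.
  set (B := box 0 d (fun _ => K)).
  assert (Hbox : pprod 0 d (fun j => psum (lam j) K) <= psum (mu d) (length B)).
  { rewrite <- (lsum_prodeig_box lam 0 d (fun _ => K)).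
    apply (lsum_prodeig_le_psum lam lam_ge0 d (mu d) Hmu);
      [apply NoDup_box | apply length_of_In_box]. }
  pose proof (psum_le_infinite_sum _ _ (length B) mu_ge0 HL).
  pose proof (psum_le_mul_first (mu d) n mu_noninc).
  pose proof (listing_first_le lam lam_ge0 d (mu d) Hmu lam_noninc).
  pose proof (le_INR _ _ Hn). pose proof (pos_INR n). pose proof (mu_ge0 O).
  assert (INR n * mu d O <= INR N * pprod 0 d (fun j => lam j O)) by (apply Rmult_le_compat; lra).
  lra.
Qed.

Lemma psum_partial_ratio_le d K : (1 <= d)%nat ->
  psum (fun j => sum_f_R0 (lam j) K / lam j O - 1) d <= 4 / 3 * INR N - 1.
Proof.
  intros Hd. set (x := fun j => sum_f_R0 (lam j) K / lam j O - 1).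
  assert (Hx : forall j, 0 <= x j).
  { intros j. unfold x. rewrite <- psum_S_sum_f_R0.
    apply div_sub_one_nonneg; [apply lam_first_pos|].
    pose proof (psum_le_psum (lam j) 1 (S K) (lam_ge0 j) ltac:(lia)) as H1.
    change (psum (lam j) 1) with (0 + lam j O) in H1. lra. }
  pose proof (one_add_psum_le_pprod x d Hx) as Hprod.
  replace (pprod 0 d (fun j => 1 + x j))
    with (pprod 0 d (fun j => psum (lam j) (S K)) / pprod 0 d (fun j => lam j O)) in Hprod.
  2:{ rewrite <- pprod_div by exact lam_first_pos. apply pprod_ext. intros j. unfold x.
      rewrite psum_S_sum_f_R0. ring. }
  pose proof (pprod_psum_le_of_complexity d (S K) Hd).
  pose proof (pprod_pos _ d 0 lam_first_pos).
  assert (pprod 0 d (fun j => psum (lam j) (S K)) / pprod 0 d (fun j => lam j O) <= 4 / 3 * INR N).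
  { apply (Rmult_le_reg_r (pprod 0 d (fun j => lam j O))); [assumption|].
    unfold Rdiv. rewrite Rmult_assoc, Rinv_l by lra. lra. }
  lra.
Qed.

Lemma summable_of_bounded_complexity :
  exists S, infinite_sum (fun j => Lam j / lam j O - 1) S.
Proof.
  assert (Hbound : forall d, (1 <= d)%nat ->
    psum (fun j => Lam j / lam j O - 1) d <= 4 / 3 * INR N - 1).
  { intros d Hd.
    apply (Rle_cv_lim (Vn := fun _ => 4 / 3 * INR N - 1) (fun K => psum_partial_ratio_le d K Hd)).
    - apply Un_cv_psum. intros j. apply CV_minus; [|apply Un_cv_const].
      apply CV_mult; [apply lam_sum | apply Un_cv_const].
    - apply Un_cv_const. }
  apply (ex_infinite_sum_bounded _ (4 / 3 * INR N - 1)).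
  - exact normalized_tail_nonneg.
  - intros n. apply (Rle_trans _ (psum (fun j => Lam j / lam j O - 1) (S n))); [|apply Hbound; lia].
    apply psum_le_psum; [exact normalized_tail_nonneg | lia].
Qed.

End BoundedComplexity.

Section Summable.

Variable sigma : R.
Hypothesis normalized_tail_sum : infinite_sum (fun j => Lam j / lam j O - 1) sigma.

Lemma one_sub_ratio_cutoff_le J K eta j : (1 <= K)%nat ->
  (forall j, (j < J)%nat -> (1 - eta) * Lam j <= psum (lam j) K) ->
  1 - psum (lam j) (cutoff J K j) / Lam j <= if (j <? J)%nat then eta else Lam j / lam j O - 1.
Proof.
  intros HK HKJ. pose proof (Lam_pos j). pose proof (lam_first_pos j).
  unfold cutoff. destruct (Nat.ltb_spec j J) as [Hj|Hj].
  - specialize (HKJ j Hj).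
    apply (Rmult_le_reg_r (Lam j)); [lra|]. unfold Rdiv.
    rewrite Rmult_minus_distr_r, Rmult_assoc, Rinv_l by lra. lra.
  - change (psum (lam j) 1) with (0 + lam j O). rewrite Rplus_0_l.
    pose proof (lam_first_le_Lam j).
    replace (1 - lam j O / Lam j) with ((Lam j - lam j O) / Lam j) by (field; lra).
    replace (Lam j / lam j O - 1) with ((Lam j - lam j O) / lam j O) by (field; lra).
    unfold Rdiv. apply Rmult_le_compat_l; [lra|]. apply Rinv_le_contravar; lra.
Qed.

Lemma pprod_cutoff_ge J K eta d : (1 <= K)%nat -> 0 <= eta ->
  (forall j, (j < J)%nat -> (1 - eta) * Lam j <= psum (lam j) K) ->
  (1 - (INR J * eta + (sigma - psum (fun j => Lam j / lam j O - 1) J))) * pprod 0 d Lam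
    <= pprod 0 d (fun j => psum (lam j) (cutoff J K j)).
Proof.
  intros HK Heta HKJ.
  set (s := fun j => Lam j / lam j O - 1).
  set (rho := fun j => psum (lam j) (cutoff J K j) / Lam j).
  assert (Hrho : forall j, 0 <= rho j <= 1).
  { intros j. pose proof (Lam_pos j). unfold rho. split.
    - unfold Rdiv; apply Rmult_le_pos; [apply psum_nonneg, lam_ge0|].
      left; apply Rinv_0_lt_compat; lra.
    - apply (Rmult_le_reg_r (Lam j)); [lra|]. unfold Rdiv.
      rewrite Rmult_assoc, Rinv_l, Rmult_1_r, Rmult_1_l by lra.
      apply psum_le_infinite_sum; auto. }
  assert (Hs : forall j, 0 <= s j) by exact normalized_tail_nonneg.
  assert (Hdefect : psum (fun j => 1 - rho j) d <= INR J * eta + (sigma - psum s J)).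
  { apply (Rle_trans _ (psum (fun j => if (j <? J)%nat then eta else s j) d)).
    { apply psum_le. intros j. apply one_sub_ratio_cutoff_le; auto. }
    apply (Rle_trans _ _ _ (psum_cutoff_le (fun _ => eta) s J d (fun _ => Heta) Hs)).
    rewrite psum_const. apply Rplus_le_compat_l.
    apply (psum_le_infinite_sum _ _ _ (fun k => Hs (J + k)%nat)).
    apply infinite_sum_tail, normalized_tail_sum. }
  pose proof (one_sub_psum_le_pprod rho d Hrho).
  replace (pprod 0 d (fun j => psum (lam j) (cutoff J K j))) with (pprod 0 d rho * pprod 0 d Lam).
  2:{ unfold rho. rewrite pprod_div by exact Lam_pos. field.
      apply Rgt_not_eq, pprod_pos, Lam_pos. }
  apply Rmult_le_compat_r; [apply pprod_nonneg; intros j; left; apply Lam_pos | lra].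
Qed.

Lemma ex_cutoff_pprod_ge delta : 0 < delta ->
  exists J K, (1 <= K)%nat /\ forall d,
    (1 - delta) * pprod 0 d Lam <= pprod 0 d (fun j => psum (lam j) (cutoff J K j)).
Proof.
  intros Hdelta.
  destruct (infinite_sum_eventually_gt _ _ (delta / 2) normalized_tail_sum ltac:(lra)) as [J HJ].
  specialize (HJ J (le_n J)).
  set (eta := delta / 2 / (INR J + 1)).
  pose proof (pos_INR J) as HJ0.
  assert (Heta : 0 < eta) by (unfold eta; apply Rdiv_lt_0_compat; lra).
  assert (HetaJ : INR J * eta <= delta / 2).
  { unfold eta. apply (Rmult_le_reg_r (INR J + 1)); [lra|].
    replace (INR J * (delta / 2 / (INR J + 1)) * (INR J + 1)) with (INR J * (delta / 2))
      by (field; lra).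
    nra. }
  destruct (ex_bound_forall_lt (fun j n => (1 - eta) * Lam j <= psum (lam j) n) J) as [K0 HK].
  { intros j. pose proof (Lam_pos j).
    destruct (infinite_sum_eventually_gt _ _ (eta * Lam j) (lam_sum j)) as [N HN]; [nra|].
    exists N. intros n Hn. specialize (HN n Hn). lra. }
  exists J, (S K0). split; [lia|]. intros d.
  pose proof (pprod_cutoff_ge J (S K0) eta d ltac:(lia) (Rlt_le _ _ Heta)
    (fun j Hj => HK j (S K0) Hj ltac:(lia))) as Hcut.
  assert (Hdefect : 1 - delta
    <= 1 - (INR J * eta + (sigma - psum (fun j => Lam j / lam j O - 1) J))) by lra.
  apply (Rmult_le_compat_r (pprod 0 d Lam)) in Hdefect;
    [lra | apply pprod_nonneg; intros j; apply Rlt_le, Lam_pos].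
Qed.

Lemma bounded_complexity_of_summable eps : 0 < eps < 1 ->
  exists N, forall d, (1 <= d)%nat -> exists n, (n <= N)%nat /\ approx_ok (mu d) n eps.
Proof.
  intros Heps.
  destruct (ex_cutoff_pprod_ge (eps ^ 2) ltac:(simpl; nra)) as [J [K [HK Hcut]]].
  exists (K ^ J)%nat. intros d Hd.
  pose proof (mu_listing d Hd) as Hmu. destruct Hmu as [mu_ge0 _].
  pose proof (psum_le_pprod_sums lam lam_ge0 d (mu d) (mu_listing d Hd) Lam lam_sum) as Hup.
  destruct (ex_infinite_sum_bounded _ _ mu_ge0 Hup) as [L HL].
  pose proof (infinite_sum_le_bound _ _ _ HL Hup) as HLle.
  set (B := box 0 d (cutoff J K)).
  exists (length B). split.
  { pose proof (length_box_cutoff J K d 0 HK). rewrite Nat.sub_0_r in *. assumption. }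
  apply (approx_ok_iff _ _ _ _ mu_ge0 HL).
  specialize (Hcut d). rewrite <- lsum_prodeig_box in Hcut. fold B in Hcut.
  pose proof (lsum_prodeig_le_psum lam lam_ge0 d (mu d) (mu_listing d Hd) B
    (NoDup_box _ _ _) (length_of_In_box _ _ _)) as Hbox.
  assert (0 <= 1 - eps ^ 2) by (simpl; nra).
  apply (Rle_trans _ ((1 - eps ^ 2) * pprod 0 d Lam)); [apply Rmult_le_compat_l|]; lra.
Qed.

End Summable.

End Proposition5.

Theorem proposition5
  (lam : nat -> nat -> R)
  (Hlam : forall j, eig_seq (lam j))
  (Hpos : forall j, 0 < lam j 0%nat)
  (mu : nat -> nat -> R)
  (Hmu : forall d, (1 <= d)%nat -> tensor_listing lam d (mu d)) :
  (forall eps, 0 < eps < 1 ->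
     exists N : nat, forall d, (1 <= d)%nat ->
       exists n : nat, (n <= N)%nat /\ approx_ok (mu d) n eps)
  <->
  (exists s : nat -> R,
     (forall j, infinite_sum (fun k => lam j (S k) / lam j 0%nat) (s j)) /\
     exists S, infinite_sum s S).
Proof.
  assert (Hge0 : forall j k, 0 <= lam j k) by (intros j; apply Hlam).
  assert (Hnoninc : forall j k, lam j (S k) <= lam j k) by (intros j; apply Hlam).
  destruct (choice (fun j L => infinite_sum (lam j) L)) as [Lam HLam].
  { intros j. apply Hlam. }
  assert (Hs : forall j,
    infinite_sum (fun k => lam j (S k) / lam j 0%nat) (Lam j / lam j O - 1)).
  { intros j. apply infinite_sum_normalized_tail; [apply Rgt_not_eq, Hpos | apply HLam]. }
  split.
  - intros Hcompl. destruct (Hcompl (1 / 2)) as [N HN]; [lra|].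
    exists (fun j => Lam j / lam j O - 1). split; [exact Hs|].
    exact (summable_of_bounded_complexity lam Hge0 Hnoninc Hpos Lam HLam mu Hmu N HN).
  - intros [s [Hs' [sigma Hsigma]]].
    replace s with (fun j => Lam j / lam j O - 1) in Hsigma
      by (extensionality j; exact (uniqueness_sum _ _ _ (Hs j) (Hs' j))).
    exact (bounded_complexity_of_summable lam Hge0 Hpos Lam HLam mu Hmu sigma Hsigma).
Qed.
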